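(* Let $p$ be a prime, let $G$ be a finite abelian $p$-group, and let $\boldsymbol{\alpha}=(\alpha_1,\ldots,\alpha_r)$ be a basis for a subgroup of $G$, with $n_i=\log_p|\alpha_i|$, $m_0=\min_i n_i$ and $m=\max_i n_i$. Let $\beta\in G$, let $(\mathbf{x},h)={\rm DL}^*(\boldsymbol{\alpha},\beta)$, and let $\gamma=\beta\boldsymbol{\alpha}^{-\mathbf{x}}$. Then: (i) If $|\beta|\le p^m$ then $|\gamma|=p^h$. (ii) If $|\beta|\le p^m$ and $|\gamma|\le p^{m_0}$, then $\gamma$ is independent of $\boldsymbol{\alpha}$.
   Context: A vector $\boldsymbol{\gamma}=(\gamma_1,\ldots,\gamma_s)$ (trivial entries allowed) is a basis for $\langle\boldsymbol{\gamma}\rangle$ if each element of $\langle\boldsymbol{\gamma}\rangle$ is uniquely $\boldsymbol{\gamma}^{\mathbf{x}}=\prod\gamma_i^{x_i}$ with $0\le x_i<|\gamma_i|$; ${\rm DL}(\boldsymbol{\gamma},\delta)=\mathbf{x}$. For integers $0\le a<b$, with $q_i=p^{\,a+\max(0,n_i-b)}$, let $\boldsymbol{\alpha}(a,b)=(\alpha_1^{q_1},\ldots,\alpha_r^{q_r})$ and ${\rm DL}_{\boldsymbol{\alpha}}(a,b,\delta)={\rm DL}(\boldsymbol{\alpha}(a,b),\delta)$ (defined when $\delta\in\langle\boldsymbol{\alpha}(a,b)\rangle$). For $0\le j<k$ and $\beta\in G$, ${\rm DL}^*_{\boldsymbol{\alpha}}(j,k,\beta)$ is the pair $(\mathbf{x},h)$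 where $h$ is the least integer with $0\le h<k-j$ such that $\mathbf{x}={\rm DL}_{\boldsymbol{\alpha}}(j+h,k,\beta^{p^h})$ is defined; if no such $h$ exists, $h=k-j$ and $\mathbf{x}=0$. When $\langle\boldsymbol{\alpha}\rangle$ has exponent $p^m$, ${\rm DL}^*(\boldsymbol{\alpha},\beta)={\rm DL}^*_{\boldsymbol{\alpha}}(0,m,\beta)$. The components of $\mathbf{x}$ are used as nonnegative integer exponents in $\boldsymbol{\alpha}^{-\mathbf{x}}$. An element $\gamma$ is independent of $\boldsymbol{\alpha}$ if $(\alpha_1,\ldots,\alpha_r,\gamma)$ is a basis for $\langle\alpha_1,\ldots,\alpha_r,\gamma\rangle$. *)

From mathcomp Require Import all_boot all_fingroup.
Set Implicit Arguments.
Unset Strict Implicit.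
Unset Printing Implicit Defensive.

Local Open Scope group_scope.

Section Defs.
Variable gT : finGroupType.

Definition gen_seq (s : seq gT) : {group gT} := <<[set y in s]>>%G.

Definition entry (s : seq gT) (i : nat) : gT := nth 1 s i.

Definition seq_pow (s : seq gT) (x : seq nat) : gT :=
  \prod_(i < size s) (nth 1 s i) ^+ (nth 0%N x i).

Definition DL_rep (s : seq gT) (d : gT) (x : seq nat) : Prop :=
  [/\ size x = size s,
      (forall i, (i < size s)%N -> (nth 0%N x i < #[entry s i])%N)
    & seq_pow s x = d].

Definition is_basis (s : seq gT) : Prop :=
  forall d, d \in gen_seq s -> exists! x, DL_rep s d x.

Definition nlog (p : nat) (a : gT) : nat := logn p #[a].

(* alpha(a,b) = (alpha_i^(q_i)),  q_i = p^(a + max(0, n_i - b)) *)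
Definition alpha_ab (p : nat) (alpha : seq gT) (a b : nat) : seq gT :=
  [seq y ^+ (p ^ (a + (nlog p y - b)))%N | y <- alpha].

(* (x,h) = DL*_alpha(j,k,beta), written out as a specification *)
Definition DLstar_spec (p : nat) (alpha : seq gT) (j k : nat) (beta : gT)
    (x : seq nat) (h : nat) : Prop :=
  (forall h', (h' < h)%N -> beta ^+ (p ^ h')%N \notin gen_seq (alpha_ab p alpha (j + h') k)) /\
  ( ((h < k - j)%N /\
     beta ^+ (p ^ h)%N \in gen_seq (alpha_ab p alpha (j + h) k) /\
     DL_rep (alpha_ab p alpha (j + h) k) (beta ^+ (p ^ h)%N) x)
  \/ (h = k - j /\ x = nseq (size alpha) 0%N) ).

Definition mmax (p : nat) (alpha : seq gT) : nat :=
  \max_(i < size alpha) nlog p (entry alpha i).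
Definition mmin (p : nat) (alpha : seq gT) : nat :=
  \big[minn/mmax p alpha]_(i < size alpha) nlog p (entry alpha i).

Definition DLstar (p : nat) (alpha : seq gT) (beta : gT) (x : seq nat) (h : nat) : Prop :=
  DLstar_spec p alpha 0 (mmax p alpha) beta x h.

Definition independent_of (alpha : seq gT) (g : gT) : Prop :=
  is_basis (rcons alpha g).

End Defs.

From mathcomp Require Import all_boot all_order all_fingroup all_solvable.

(* Write s := alpha^x, so gamma^(p^k) = beta^(p^k) (s^(p^k))^-1 with
   s^(p^k) in <alpha(k, m)>.  Hence gamma^(p^k) lies in <alpha(k, m)> exactly
   when beta^(p^k) does: the defining property of h says that gamma^(p^h) = 1
   while gamma^(p^k) is not even in <alpha(k, m)> for k < h, so
   #[gamma] = p^h.  For independence it suffices that <gamma> meets <alpha>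
   trivially.  Otherwise the order-p element d = gamma^(p^(h-1)) lies in
   <alpha>; writing d = alpha^y, d^p = 1 forces p^(n_i - 1) | y_i, and since
   h <= m_0 <= n_i this puts d, hence beta^(p^(h-1)), in <alpha(h-1, m)>,
   contradicting the minimality of h. *)

Set Implicit Arguments.
Unset Strict Implicit.
Unset Printing Implicit Defensive.

Import Order.TTheory.
Local Open Scope group_scope.

Section Representations.
Variable gT : finGroupType.
Implicit Types (s : seq gT) (g d : gT).

Lemma seq_pow_gen s x : seq_pow s x \in gen_seq s.
Proof.
by apply: group_prod => i _; apply/groupX/mem_gen; rewrite inE mem_nth.
Qed.

Lemma seq_pow_nseq0 s n : seq_pow s (nseq n 0%N) = 1.
Proof. by rewrite /seq_pow big1 // => i _; rewrite nth_nseq if_same expg0. Qed.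

Lemma seq_pow_rcons s g y k : size y = size s ->
  seq_pow (rcons s g) (rcons y k) = seq_pow s y * g ^+ k.
Proof.
move=> size_y; rewrite /seq_pow size_rcons big_ord_recr /=.
rewrite !nth_rcons ltnn eqxx -size_y ltnn eqxx size_y; congr (_ * _).
by apply: eq_bigr => i _; rewrite !nth_rcons (ltn_ord i) size_y (ltn_ord i).
Qed.

Lemma DL_rep_rcons s g a y k : DL_rep s a y -> (k < #[g])%N ->
  DL_rep (rcons s g) (a * g ^+ k) (rcons y k).
Proof.
case=> size_y y_lt <- k_lt; split; first by rewrite !size_rcons size_y.
  move=> i; rewrite size_rcons ltnS leq_eqVlt => /orP[/eqP->|lt_i].
    by rewrite /entry !nth_rcons size_y !ltnn !eqxx.
  by rewrite /entry !nth_rcons size_y lt_i; apply: y_lt.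
by rewrite seq_pow_rcons.
Qed.

Lemma DL_rep_rconsP s g d x : DL_rep (rcons s g) d x ->
  exists y k, [/\ x = rcons y k, DL_rep s (seq_pow s y) y, (k < #[g])%N
                & d = seq_pow s y * g ^+ k].
Proof.
case: x / lastP => [|y k] [size_x x_lt <-]; first by move: size_x; rewrite size_rcons.
move: size_x x_lt; rewrite !size_rcons => /succn_inj size_y x_lt.
exists y, k; split; rewrite ?seq_pow_rcons //.
  split=> // i lt_i; have := x_lt i (leqW lt_i).
  by rewrite /entry !nth_rcons size_y lt_i.
by have := x_lt _ (ltnSn _); rewrite /entry !nth_rcons size_y !ltnn !eqxx.
Qed.

Lemma basis_order_dvdn s (f : nat -> nat) : is_basis s ->
  \prod_(i < size s) entry s i ^+ f i = 1 ->
  forall i, (i < size s)%N -> (#[entry s i] %| f i)%N.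
Proof.
move=> basis_s prod1 i lt_i.
pose y := mkseq (fun j => f j %% #[entry s j])%N (size s).
have rep_y : DL_rep s 1 y.
  split; first by rewrite size_mkseq.
    by move=> j lt_j; rewrite nth_mkseq // ltn_pmod // order_gt0.
  rewrite -prod1; apply: eq_bigr => j _.
  by rewrite nth_mkseq // expg_mod_order.
have rep_0 : DL_rep s 1 (nseq (size s) 0%N).
  split; first by rewrite size_nseq.
    by move=> j _; rewrite nth_nseq if_same order_gt0.
  exact: seq_pow_nseq0.
have [z [_ uniq_z]] := basis_s 1 (group1 _).
have /(congr1 (nth 0%N ^~ i)) : y = nseq (size s) 0%N.
  by rewrite -(uniq_z _ rep_y) -(uniq_z _ rep_0).
by rewrite nth_mkseq // nth_nseq lt_i => /eqP; rewrite /dvdn eq_sym.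
Qed.

End Representations.

Section Orders.
Variable gT : finGroupType.
Implicit Types g c : gT.

Lemma order_pexp p g h : prime p -> g ^+ (p ^ h) = 1 ->
  (forall k, (k < h)%N -> g ^+ (p ^ k) != 1) -> #[g] = (p ^ h)%N.
Proof.
move=> p_pr gh1 minh; have: (#[g] %| p ^ h)%N by rewrite order_dvdn gh1.
case/(dvdn_pfactor _ _ p_pr) => k le_kh ord_g; rewrite ord_g.
case: (ltngtP k h) => [lt_kh | lt_hk | -> //]; last by rewrite ltnNge le_kh in lt_hk.
by have := minh k lt_kh; rewrite -ord_g expg_order eqxx.
Qed.

(* The subgroup of order p of a cyclic p-group lies in each nontrivial subgroup. *)
Lemma cycle_pexp_mem p g c k : prime p -> #[g] = (p ^ k.+1)%N ->
  c \in <[g]> -> c != 1 -> g ^+ (p ^ k) \in <[c]>.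
Proof.
move=> p_pr ord_g c_g c1; have p_gt0 := prime_gt0 p_pr.
have := order_dvdG c_g; rewrite -/#[g] ord_g.
case/(dvdn_pfactor _ _ p_pr) => e _ ord_c.
have e_gt0 : (0 < e)%N.
  by rewrite lt0n; apply: contra c1 => /eqP e0; rewrite -order_eq1 ord_c e0.
have ord_d : #[g ^+ (p ^ k)] = p.
  by rewrite orderXdiv ord_g ?expnS ?mulnK ?expn_gt0 ?p_gt0 // -expnS dvdn_exp2l.
have sub_dc : <[g ^+ (p ^ k)]> \subset <[c]>.
  rewrite -(cardSg_cyclic (cycle_cyclic g)) ?cycle_subG ?mem_cycle //.
  by rewrite -/#[_] -/#[c] ord_d ord_c -{1}(expn1 p) dvdn_exp2l.
exact: subsetP sub_dc _ (cycle_id _).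
Qed.

End Orders.

Section Abelian.
Variables (gT : finGroupType) (G : {group gT}).
Hypothesis abelG : abelian G.
Implicit Types (s : seq gT) (g d : gT).

Lemma expg_prod n (F : nat -> gT) c : (forall i, F i \in G) ->
  (\prod_(i < n) F i) ^+ c = \prod_(i < n) F i ^+ c.
Proof.
move=> FG; elim: n => [|n IHn]; first by rewrite !big_ord0 expg1n.
rewrite !big_ord_recr /= expgMn ?IHn //; apply: (centsP abelG) => //.
exact: group_prod.
Qed.

Lemma entry_subset s i : {subset s <= G} -> entry s i \in G.
Proof.
move=> sG; rewrite /entry; have [lt_i | le_i] := ltnP i (size s).
  exact/sG/mem_nth.
by rewrite nth_default.
Qed.

Lemma gen_seq_sub s : {subset s <= G} -> gen_seq s \subset G.
Proof. by move=> sG; rewrite gen_subG; apply/subsetP => y; rewrite inE => /sG. Qed.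

Lemma seq_pow_map_expg s x c : {subset s <= G} ->
  seq_pow [seq y ^+ c | y <- s] x = seq_pow s x ^+ c.
Proof.
move=> sG; rewrite /seq_pow size_map (@expg_prod _ (fun i => nth 1 s i ^+ nth 0%N x i)).
  by apply: eq_bigr => i _; rewrite (nth_map 1) // -!expgM mulnC.
by move=> i; rewrite groupX ?entry_subset.
Qed.

Lemma basis_rcons s g : {subset s <= G} -> g \in G -> is_basis s ->
  <[g]> :&: gen_seq s = 1 -> is_basis (rcons s g).
Proof.
move=> sG gG basis_s TI d.
have sub_gen : gen_seq (rcons s g) \subset gen_seq s * <[g]>.
  rewrite -comm_joingE; last first.
    apply/normC/cents_norm/(sub_abelian_cent2 abelG); rewrite ?gen_seq_sub //.
    by rewrite cycle_subG.
  rewrite gen_subG; apply/subsetP => y; rewrite inE mem_rcons inE.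
  case/orP=> [/eqP-> | ys]; first exact/(subsetP (joing_subr _ _))/cycle_id.
  by apply/(subsetP (joing_subl _ _))/mem_gen; rewrite inE.
move/(subsetP sub_gen)/mulsgP=> [a _ a_s /cycleP[k ->] ->].
have [y [rep_y uniq_y]] := basis_s a a_s.
exists (rcons y (k %% #[g])%N); split.
  by rewrite -(expg_mod_order g k); apply: DL_rep_rcons; rewrite ?ltn_pmod.
move=> _ /DL_rep_rconsP[y' [k' [-> rep_y' lt_k' def_a]]].
have gk_eq : g ^+ k * (g ^+ k')^-1 = a^-1 * seq_pow s y'.
  by rewrite -{1}(mulKg a (g ^+ k)) def_a -mulgA mulgK.
have : g ^+ k * (g ^+ k')^-1 \in <[g]> :&: gen_seq s.
  by rewrite inE groupM ?groupV ?mem_cycle //= gk_eq groupM ?groupV ?seq_pow_gen.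
rewrite TI => /set1gP/eqP; rewrite -eq_mulgV1 => /eqP gk_gk'.
have def_a' : a = seq_pow s y' by apply: (mulIg (g ^+ k)); rewrite def_a gk_gk'.
move/eqP: gk_gk'; rewrite eq_expg_mod_order (modn_small lt_k') => /eqP ->.
by rewrite (uniq_y y') // def_a'.
Qed.

Lemma basis_expp_mem p s k d : prime p -> p.-group G -> {subset s <= G} ->
  is_basis s -> (forall i, (i < size s)%N -> (k < nlog p (entry s i))%N) ->
  d \in gen_seq s -> d ^+ p = 1 -> d \in gen_seq [seq y ^+ (p ^ k) | y <- s].
Proof.
move=> p_pr pG sG basis_s lt_k ds dp1.
have [y [[size_y _ def_d] _]] := basis_s d ds.
have dvd_y i : (i < size s)%N -> (p ^ k %| nth 0 y i)%N.
  move=> lt_i; have ord_i : #[entry s i] = (p ^ nlog p (entry s i))%N.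
    by rewrite /nlog -p_part part_pnat_id //; apply: mem_p_elt pG (entry_subset _ sG).
  have prod1 : \prod_(j < size s) entry s j ^+ (nth 0 y j * p)%N = 1.
    rewrite -[RHS]dp1 -def_d /seq_pow (@expg_prod _ (fun j => nth 1 s j ^+ nth 0 y j)).
        by apply: eq_bigr => j _; rewrite -expgM.
    by move=> j; rewrite groupX ?entry_subset.
  have := @basis_order_dvdn gT s (fun j => nth 0 y j * p)%N basis_s prod1 i lt_i; rewrite ord_i => dvd_i.
  rewrite -(dvdn_pmul2r (prime_gt0 p_pr)) -expnSr; apply: dvdn_trans dvd_i.
  by rewrite dvdn_exp2l ?lt_k.
suff -> : d = seq_pow [seq z ^+ (p ^ k) | z <- s] [seq t %/ p ^ k | t <- y]%N.
  exact: seq_pow_gen.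
rewrite -def_d /seq_pow size_map; apply: eq_bigr => i _.
by rewrite (nth_map 1) // (nth_map 0) ?size_y // -expgM mulnC divnK ?dvd_y.
Qed.
End Abelian.

Section Exponents.
Variables (gT : finGroupType) (p : nat) (alpha : seq gT).

Lemma nlog_le_mmax y : y \in alpha -> (nlog p y <= mmax p alpha)%N.
Proof.
move=> y_alpha; rewrite -(nth_index 1 y_alpha).
have lt_i : (index y alpha < size alpha)%N by rewrite index_mem.
exact: (@leq_bigmax _ (fun i : 'I_(size alpha) => nlog p (entry alpha i)) (Ordinal lt_i)).
Qed.

Lemma mmin_le_nlog i :
  (i < size alpha)%N -> (mmin p alpha <= nlog p (entry alpha i))%N.
Proof.
by move=> lt_i; apply: (@bigmin_le _ nat _ _ (Ordinal lt_i)).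
Qed.

Lemma alpha_ab_mmax a :
  alpha_ab p alpha a (mmax p alpha) = [seq y ^+ (p ^ a) | y <- alpha].
Proof.
apply/eq_in_map => y /nlog_le_mmax.
by rewrite -subn_eq0 => /eqP ->; rewrite addn0.
Qed.

End Exponents.

Section DLstar.
Variables (p : nat) (gT : finGroupType) (G : {group gT}).
Variables (alpha : seq gT) (beta : gT) (x : seq nat) (h : nat).
Hypotheses (p_pr : prime p) (abelG : abelian G) (pG : p.-group G).
Hypotheses (alphaG : {subset alpha <= G}) (basis_alpha : is_basis alpha).
Hypotheses (betaG : beta \in G) (DLstar_xh : DLstar p alpha beta x h).
Hypothesis ord_beta : (#[beta] <= p ^ mmax p alpha)%N.

Local Notation m := (mmax p alpha).
Local Notation gamma := (beta * (seq_pow alpha x)^-1).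

Lemma seq_pow_alphaG : seq_pow alpha x \in G.
Proof. exact: subsetP (gen_seq_sub alphaG) _ (seq_pow_gen _ _). Qed.

Lemma gammaG : gamma \in G.
Proof. by rewrite groupM ?groupV ?seq_pow_alphaG. Qed.

Lemma gamma_expg n : gamma ^+ n = beta ^+ n * (seq_pow alpha x ^+ n)^-1.
Proof.
by rewrite expgMn ?expVgn //; apply: (centsP abelG); rewrite ?groupV ?seq_pow_alphaG.
Qed.

Lemma seq_pow_alpha_ab k :
  seq_pow (alpha_ab p alpha k m) x = seq_pow alpha x ^+ (p ^ k).
Proof. by rewrite alpha_ab_mmax (seq_pow_map_expg abelG). Qed.

Lemma mem_alpha_ab_gamma k :
  (gamma ^+ (p ^ k) \in gen_seq (alpha_ab p alpha k m))
    = (beta ^+ (p ^ k) \in gen_seq (alpha_ab p alpha k m)).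
Proof. by rewrite gamma_expg groupMr // groupV -seq_pow_alpha_ab seq_pow_gen. Qed.

Lemma DLstar_minimal k : (k < h)%N ->
  gamma ^+ (p ^ k) \notin gen_seq (alpha_ab p alpha k m).
Proof.
by case: DLstar_xh => minh _ /minh; rewrite add0n mem_alpha_ab_gamma.
Qed.

Lemma DLstar_expp_h : gamma ^+ (p ^ h) = 1.
Proof.
case: DLstar_xh => _ [[_ [_ [_ _ rep_beta]]] | [-> ->]].
  by rewrite add0n in rep_beta; rewrite gamma_expg -seq_pow_alpha_ab rep_beta mulgV.
rewrite seq_pow_nseq0 invg1 mulg1 subn0; apply/eqP; rewrite -order_dvdn.
have [e ord_b] := p_natP (mem_p_elt pG betaG).
by move: ord_beta; rewrite ord_b leq_exp2l ?prime_gt1 // => le_em; rewrite dvdn_exp2l.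
Qed.

Lemma DLstar_order : #[gamma] = (p ^ h)%N.
Proof.
apply: order_pexp p_pr DLstar_expp_h _ => k lt_kh.
by apply: contraNneq (DLstar_minimal lt_kh) => ->; rewrite group1.
Qed.

Lemma DLstar_cycle_TI : (#[gamma] <= p ^ mmin p alpha)%N ->
  <[gamma]> :&: gen_seq alpha = 1.
Proof.
rewrite DLstar_order leq_exp2l ?prime_gt1 // => le_h.
apply/trivgP/subsetP => c /setIP[c_gamma c_alpha]; rewrite inE.
apply: contraT => c1; move: DLstar_order le_h (DLstar_minimal (k := h.-1)).
case: h => [|k] ord_g le_h minimal.
  move/eqP: ord_g; rewrite order_eq1 => /eqP g1.
  by move: c_gamma c1; rewrite g1 => /cycleP[j ->]; rewrite expg1n eqxx.
have d_alpha : gamma ^+ (p ^ k) \in gen_seq alpha.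
  by apply: subsetP (cycle_pexp_mem p_pr ord_g c_gamma c1); rewrite cycle_subG.
have d_p : (gamma ^+ (p ^ k)) ^+ p = 1 by rewrite -expgM -expnSr -ord_g expg_order.
have lt_k i : (i < size alpha)%N -> (k < nlog p (entry alpha i))%N.
  by move=> lt_i; apply: leq_trans le_h (mmin_le_nlog p lt_i).
have := basis_expp_mem abelG p_pr pG alphaG basis_alpha lt_k d_alpha d_p.
by rewrite -alpha_ab_mmax (negPf (minimal _)).
Qed.

End DLstar.

Theorem lemma4 (p : nat) (gT : finGroupType) (G : {group gT})
  (alpha : seq gT) (beta : gT) (x : seq nat) (h : nat) :
  prime p -> abelian G -> p.-group G ->
  {subset alpha <= G} -> is_basis alpha ->
  beta \in G ->
  DLstar p alpha beta x h ->
  let gamma := beta * (seq_pow alpha x)^-1 in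
  (#[beta] <= p ^ mmax p alpha)%N ->
  #[gamma] = (p ^ h)%N /\
  ((#[gamma] <= p ^ mmin p alpha)%N -> independent_of alpha gamma).
Proof.
move=> p_pr abelG pG alphaG basis_alpha betaG DLstar_xh gamma ord_beta.
split=> [|le_h]; first exact: (DLstar_order p_pr abelG pG alphaG betaG DLstar_xh).
have TI := DLstar_cycle_TI p_pr abelG pG alphaG basis_alpha betaG DLstar_xh ord_beta le_h.
rewrite /independent_of /gamma.
exact: (basis_rcons abelG alphaG (gammaG _ alphaG betaG) basis_alpha TI).
Qed.
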